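(* Let $(\mathbb{I},\bullet,e)$ be a monoidal category, $\mathbb{C}$ a finitely complete category, and $(\mathsf{P},\mu^{\mathsf{P}},\eta^{\mathsf{P}})$ a parameterised monad with $\mathsf{P}:\mathbb{I}^{\mathsf{op}}\times\mathbb{I}\to[\mathbb{C},\mathbb{C}]$. Then there is a graded monad $\mathsf{G}$ on $\mathbb{C}$, graded by $\mathbb{I}$, given by the end $\mathsf{G}\,f=\int_{i}\mathsf{P}(i,i\bullet f)$, whose unit $\eta:\mathsf{Id}\to\mathsf{G}\,e$ is induced by $\eta^{\mathsf{P}}$ (components $\eta^{\mathsf{P}}_i:\mathsf{Id}\to\mathsf{P}(i,i\bullet e)$) and whose multiplication $\mathsf{G}\,f\,\mathsf{G}\,g\to\mathsf{G}(f\bullet g)$ is induced by $\mu^{\mathsf{P}}_{i,\,i\bullet f,\,(i\bullet f)\bullet g}:\mathsf{P}(i,i\bullet f)\,\mathsf{P}(i\bullet f,(i\bullet f)\bullet g)\to\mathsf{P}(i,(i\bullet f)\bullet g)$.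
   Context: A parameterised monad indexed by $\mathbb{I}$ is a functor $\mathsf{P}:\mathbb{I}^{\mathsf{op}}\times\mathbb{I}\to[\mathbb{C},\mathbb{C}]$ with natural transformations $\eta^{\mathsf{P}}_I:\mathsf{Id}\to\mathsf{P}(I,I)$ (dinatural in $I$) and $\mu^{\mathsf{P}}_{I,J,K}:\mathsf{P}(I,J)\mathsf{P}(J,K)\to\mathsf{P}(I,K)$ (natural in $I,K$, dinatural in $J$) satisfying $\mu^{\mathsf{P}}_{I,I,J}\circ\eta^{\mathsf{P}}_I\mathsf{P}(I,J)=\mathrm{id}=\mu^{\mathsf{P}}_{I,J,J}\circ\mathsf{P}(I,J)\eta^{\mathsf{P}}_J$ and $\mu^{\mathsf{P}}_{I,K,L}\circ\mu^{\mathsf{P}}_{I,J,K}\mathsf{P}(K,L)=\mu^{\mathsf{P}}_{I,J,L}\circ\mathsf{P}(I,J)\mu^{\mathsf{P}}_{J,K,L}$. A graded monad graded by the monoidal category $(\mathbb{I},\bullet,e)$ is a lax monoidal functor $\mathsf{G}:(\mathbb{I},\bullet,e)\to([\mathbb{C},\mathbb{C}],\circ,\mathsf{Id})$, i.e. a functor with natural transformations $\eta:\mathsf{Id}\to\mathsf{G}\,e$ and $\mu_{f,g}:\mathsf{G}\,f\,\mathsf{G}\,g\to\mathsf{G}(f\bullet g)$ (natural in $f,g$) satisfying unit and associativity laws. $\int_i$ denotes an end in $[\mathbb{C},\mathbb{C}]$ computed pointwise in $\mathbb{C}$.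
   Formalization: For every f and every object X of $\mathbb{C}$, the end $\int_{i}\mathsf{P}(i,i\bullet f)$ taken pointwise at X is assumed to exist, on top of $\mathbb{C}$ being finitely complete. The statement above fails without it. *)

Set Implicit Arguments.
Unset Strict Implicit.

Record Cat : Type := {
  ob :> Type;
  hom : ob -> ob -> Type;
  idm : forall a, hom a a;
  cmp : forall a b c, hom b c -> hom a b -> hom a c;
  cmp_id_l : forall a b (f : hom a b), cmp (idm b) f = f;
  cmp_id_r : forall a b (f : hom a b), cmp f (idm a) = f;
  cmp_assoc : forall a b c d (f : hom a b) (g : hom b c) (h : hom c d),
      cmp h (cmp g f) = cmp (cmp h g) f
}.
Arguments hom {_} _ _.
Arguments idm {_} _.
Arguments cmp {_ _ _ _} g f.
Notation "g ∘ f" := (cmp g f) (at level 40, left associativity).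

Record Functor (C D : Cat) : Type := {
  fobj :> C -> D;
  fmap : forall a b : C, hom a b -> hom (fobj a) (fobj b);
  fmap_id : forall a, fmap (idm a) = idm (fobj a);
  fmap_cmp : forall a b c (f : hom a b) (g : hom b c),
      fmap (g ∘ f) = fmap g ∘ fmap f
}.
Arguments fmap {_ _} _ {_ _} _.

Record NatTrans (C D : Cat) (F G : Functor C D) : Type := {
  cmpt :> forall a : C, hom (F a) (G a);
  naturality : forall (a b : C) (h : hom a b),
      cmpt b ∘ fmap F h = fmap G h ∘ cmpt a
}.

Definition IdF (C : Cat) : Functor C C.
Proof.
  refine {| fobj := fun X => X; fmap := fun a b h => h |}; reflexivity.
Defined.

Definition FComp (C : Cat) (F G : Functor C C) : Functor C C.
Proof.
  refine {| fobj := fun X => F (G X);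
            fmap := fun a b h => fmap F (fmap G h) |}.
  - intro a; rewrite !fmap_id; reflexivity.
  - intros; rewrite !fmap_cmp; reflexivity.
Defined.

Definition hcomp (C : Cat) (F F' G G' : Functor C C)
  (alpha : NatTrans F F') (beta : NatTrans G G') (X : C)
  : hom (F (G X)) (F' (G' X)) :=
  alpha (G' X) ∘ fmap F (beta X).

Definition is_terminal (C : Cat) (t : C) : Prop :=
  forall x : C, exists h : hom x t, forall h' : hom x t, h' = h.

Definition has_pullbacks (C : Cat) : Prop :=
  forall (a b c : C) (f : hom a c) (g : hom b c),
  exists (p : C) (p1 : hom p a) (p2 : hom p b),
    f ∘ p1 = g ∘ p2 /\
    forall (q : C) (q1 : hom q a) (q2 : hom q b), f ∘ q1 = g ∘ q2 ->
      exists u : hom q p, p1 ∘ u = q1 /\ p2 ∘ u = q2 /\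
        forall u' : hom q p, p1 ∘ u' = q1 -> p2 ∘ u' = q2 -> u' = u.

Definition finitely_complete (C : Cat) : Prop :=
  (exists t : C, is_terminal t) /\ has_pullbacks C.

Record Monoidal (I : Cat) : Type := {
  tens : I -> I -> I;
  tensm : forall a a' b b' : I, hom a a' -> hom b b' -> hom (tens a b) (tens a' b');
  tensm_id : forall a b, tensm (idm a) (idm b) = idm (tens a b);
  tensm_cmp : forall a a' a'' b b' b'' (u : hom a a') (u' : hom a' a'')
      (v : hom b b') (v' : hom b' b''),
      tensm (u' ∘ u) (v' ∘ v) = tensm u' v' ∘ tensm u v;
  munit : I;
  assoc : forall a b c, hom (tens (tens a b) c) (tens a (tens b c));
  assoc_inv : forall a b c, hom (tens a (tens b c)) (tens (tens a b) c);
  assoc_iso1 : forall a b c, assoc_inv a b c ∘ assoc a b c = idm _;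
  assoc_iso2 : forall a b c, assoc a b c ∘ assoc_inv a b c = idm _;
  assoc_nat : forall a a' b b' c c' (u : hom a a') (v : hom b b') (w : hom c c'),
      assoc a' b' c' ∘ tensm (tensm u v) w = tensm u (tensm v w) ∘ assoc a b c;
  lunit : forall a, hom (tens munit a) a;
  lunit_inv : forall a, hom a (tens munit a);
  lunit_iso1 : forall a, lunit_inv a ∘ lunit a = idm _;
  lunit_iso2 : forall a, lunit a ∘ lunit_inv a = idm _;
  lunit_nat : forall a a' (u : hom a a'), lunit a' ∘ tensm (idm munit) u = u ∘ lunit a;
  runit : forall a, hom (tens a munit) a;
  runit_inv : forall a, hom a (tens a munit);
  runit_iso1 : forall a, runit_inv a ∘ runit a = idm _;
  runit_iso2 : forall a, runit a ∘ runit_inv a = idm _;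
  runit_nat : forall a a' (u : hom a a'), runit a' ∘ tensm u (idm munit) = u ∘ runit a;
  pentagon : forall a b c d,
      assoc a b (tens c d) ∘ assoc (tens a b) c d
      = tensm (idm a) (assoc b c d) ∘ assoc a (tens b c) d ∘ tensm (assoc a b c) (idm d);
  triangle : forall a b,
      tensm (idm a) (lunit b) ∘ assoc a munit b = tensm (runit a) (idm b)
}.
Arguments tensm {I} m {a a' b b'} u v.
Arguments munit {I} m.

Record ParamMonad (I C : Cat) : Type := {
  P : I -> I -> Functor C C;
  Pmap : forall (i i' j j' : I), hom i' i -> hom j j' -> NatTrans (P i j) (P i' j');
  Pmap_id : forall i j X, Pmap (idm i) (idm j) X = idm _;
  Pmap_cmp : forall i i' i'' j j' j'' (u : hom i' i) (u' : hom i'' i')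
      (v : hom j j') (v' : hom j' j'') X,
      Pmap (u ∘ u') (v' ∘ v) X = Pmap u' v' X ∘ Pmap u v X;
  etaP : forall i, NatTrans (IdF C) (P i i);
  etaP_dinat : forall i j (u : hom i j) X,
      Pmap u (idm j) X ∘ etaP j X = Pmap (idm i) u X ∘ etaP i X;
  muP : forall i j k, NatTrans (FComp (P i j) (P j k)) (P i k);
  muP_nat : forall i i' j k k' (u : hom i' i) (w : hom k k') X,
      muP i' j k' X ∘ hcomp (Pmap u (idm j)) (Pmap (idm j) w) X
      = Pmap u w X ∘ muP i j k X;
  muP_dinat : forall i j j' k (v : hom j j') X,
      muP i j k X ∘ fmap (P i j) (Pmap v (idm k) X)
      = muP i j' k X ∘ Pmap (idm i) v (P j' k X);
  muP_unit_l : forall i j X, muP i i j X ∘ etaP i (P i j X) = idm _;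
  muP_unit_r : forall i j X, muP i j j X ∘ fmap (P i j) (etaP j X) = idm _;
  muP_assoc : forall i j k l X,
      muP i k l X ∘ muP i j k (P k l X) = muP i j l X ∘ fmap (P i j) (muP j k l X)
}.
Arguments Pmap {I C} p {i i' j j'} u v.

(* ---------- Graded monads = lax monoidal functors (I,.,e) -> ([C,C],o,Id) ---------- *)
Record GradedMonad (I : Cat) (M : Monoidal I) (C : Cat) : Type := {
  G : I -> Functor C C;
  Gmap : forall f f' : I, hom f f' -> NatTrans (G f) (G f');
  Gmap_id : forall f X, Gmap (idm f) X = idm _;
  Gmap_cmp : forall f f' f'' (u : hom f f') (u' : hom f' f'') X,
      Gmap (u' ∘ u) X = Gmap u' X ∘ Gmap u X;
  geta : NatTrans (IdF C) (G (munit M));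
  gmu : forall f g, NatTrans (FComp (G f) (G g)) (G (tens M f g));
  gmu_nat : forall f f' g g' (u : hom f f') (v : hom g g') X,
      gmu f' g' X ∘ hcomp (Gmap u) (Gmap v) X = Gmap (tensm M u v) X ∘ gmu f g X;
  gunit_l : forall f X,
      Gmap (lunit M f) X ∘ gmu (munit M) f X ∘ geta (G f X) = idm _;
  gunit_r : forall f X,
      Gmap (runit M f) X ∘ gmu f (munit M) X ∘ fmap (G f) (geta X) = idm _;
  gassoc : forall f g h X,
      Gmap (assoc M f g h) X ∘ gmu (tens M f g) h X ∘ gmu f g (G h X)
      = gmu f (tens M g h) X ∘ fmap (G f) (gmu g h X)
}.
Arguments Gmap {_ _ _} _ {_ _} _.

(* Raw data of a functor H : I^op x I -> C *)
Definition is_wedge (I C : Cat) (Hob : I -> I -> C)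
  (Hmap : forall i i' j j' : I, hom i' i -> hom j j' -> hom (Hob i j) (Hob i' j'))
  (W : C) (pi : forall i, hom W (Hob i i)) : Prop :=
  forall (i j : I) (u : hom i j), Hmap i i i j (idm i) u ∘ pi i = Hmap j i j j u (idm j) ∘ pi j.

Arguments is_wedge {_ _ _} _ _ _.

Definition is_end (I C : Cat) (Hob : I -> I -> C)
  (Hmap : forall i i' j j' : I, hom i' i -> hom j j' -> hom (Hob i j) (Hob i' j'))
  (W : C) (pi : forall i, hom W (Hob i i)) : Prop :=
  is_wedge Hmap W pi /\
  forall (W' : C) (pi' : forall i, hom W' (Hob i i)), is_wedge Hmap W' pi' ->
    exists h : hom W' W, (forall i, pi i ∘ h = pi' i) /\
      forall h' : hom W' W, (forall i, pi i ∘ h' = pi' i) -> h' = h.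

(* The integrand of  G f = \int_i P(i, i . f), evaluated pointwise at X :
   (i, j) |-> P(i, j . f) X *)
Definition integrand_ob (I C : Cat) (M : Monoidal I) (PM : ParamMonad I C)
  (f : I) (X : C) (i j : I) : C := P PM i (tens M j f) X.

Definition integrand_map (I C : Cat) (M : Monoidal I) (PM : ParamMonad I C)
  (f : I) (X : C) (i i' j j' : I) (u : hom i' i) (v : hom j j')
  : hom (integrand_ob M PM f X i j) (integrand_ob M PM f X i' j') :=
  Pmap PM u (tensm M v (idm f)) X.
Arguments is_end {_ _ _} _ _ _.

(* A morphism into an end is determined by its projections, and every wedge
   factors through the end.  So the action of G f on morphisms, the action of G
   on grades, the unit and the multiplication are obtained by factoring the
   wedges built from P, eta^P and mu^P, and each graded-monad law is checked
   projection by projection.  There it becomes a law of the parameterised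
   monad, combined with the (di)naturality of eta^P and mu^P, the wedge
   condition of the projections, and monoidal coherence; the two unit laws use
   the triangle identity and Kelly's identity
   rho_(a.b) = (a . rho_b) o alpha_(a,b,e). *)

From Stdlib Require Import ClassicalEpsilon.

Set Implicit Arguments.
Unset Strict Implicit.

Section CategoryFacts.
Variable C : Cat.

Lemma eq_precmp2 (a b b' c : C) (p : hom b c) (q : hom a b) (r : hom b' c) (s : hom a b')
  (e : p ∘ q = r ∘ s) (Z : C) (k : hom Z a) : p ∘ (q ∘ k) = r ∘ (s ∘ k).
Proof. rewrite !cmp_assoc, e; reflexivity. Qed.

Lemma eq_precmp1 (a b c : C) (p : hom b c) (q : hom a b) (r : hom a c)
  (e : p ∘ q = r) (Z : C) (k : hom Z a) : p ∘ (q ∘ k) = r ∘ k.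
Proof. rewrite cmp_assoc, e; reflexivity. Qed.

End CategoryFacts.
Arguments eq_precmp2 {C a b b' c p q r s} e {Z} k.
Arguments eq_precmp1 {C a b c p q r} e {Z} k.

(* Composites are kept right-associated; [arewrite E] rewrites with an
   equation [E] between binary composites anywhere inside such a chain. *)
Ltac reassoc := repeat rewrite <- cmp_assoc.
Ltac arewrite_with E :=
  let H := fresh in
  pose proof E as H; cbn [fobj fmap cmpt IdF FComp] in H |- *;
  first [ rewrite (eq_precmp2 H) | rewrite (eq_precmp1 H) | rewrite H ];
  clear H; reassoc.
Tactic Notation "arewrite" constr(E) := arewrite_with E.
Tactic Notation "arewrite" "<-" constr(E) := arewrite_with (eq_sym E).

Section MonoidalCoherence.
Variables (I : Cat) (M : Monoidal I).

Lemma tensm_cmp_l a b b' b'' (v : hom b b') (v' : hom b' b'') :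
  tensm M (idm a) v' ∘ tensm M (idm a) v = tensm M (idm a) (v' ∘ v).
Proof. rewrite <- tensm_cmp, cmp_id_l; reflexivity. Qed.

Lemma tensm_cmp_r a a' a'' b (u : hom a a') (u' : hom a' a'') :
  tensm M u' (idm b) ∘ tensm M u (idm b) = tensm M (u' ∘ u) (idm b).
Proof. rewrite <- tensm_cmp, cmp_id_l; reflexivity. Qed.

Lemma tensm_interchange a a' b b' (w : hom a a') (u : hom b b') :
  tensm M w (idm b') ∘ tensm M (idm a) u = tensm M (idm a') u ∘ tensm M w (idm b).
Proof. rewrite <- !tensm_cmp, !cmp_id_l, !cmp_id_r; reflexivity. Qed.

Lemma runit_inv_nat i j (w : hom i j) :
  tensm M w (idm (munit M)) ∘ runit_inv M i = runit_inv M j ∘ w.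
Proof.
  rewrite <- (cmp_id_l (tensm M w (idm (munit M)))), <- (runit_iso1 M j).
  reassoc. arewrite (runit_nat M w). arewrite (runit_iso2 M i).
  rewrite cmp_id_r; reflexivity.
Qed.

Lemma assoc_nat_l i j f g (w : hom i j) :
  tensm M w (idm (tens M f g)) ∘ assoc M i f g
  = assoc M j f g ∘ tensm M (tensm M w (idm f)) (idm g).
Proof. rewrite (assoc_nat M), tensm_id; reflexivity. Qed.

Lemma tensm_runit_faithful x y (u v : hom x y) :
  tensm M u (idm (munit M)) = tensm M v (idm (munit M)) -> u = v.
Proof.
  assert (Hconj : forall w : hom x y,
             w = runit M y ∘ tensm M w (idm (munit M)) ∘ runit_inv M x)
    by (intro w; rewrite runit_nat, <- cmp_assoc, runit_iso2, cmp_id_r; reflexivity).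
  intro e; rewrite (Hconj u), (Hconj v), e; reflexivity.
Qed.

(* Kelly's identity: after tensoring with e and composing with the
   associator, both sides agree by the pentagon and two triangles. *)
Lemma runit_tens a b :
  runit M (tens M a b) = tensm M (idm a) (runit M b) ∘ assoc M a b (munit M).
Proof.
  apply tensm_runit_faithful.
  assert (Halpha : assoc M a b (munit M) ∘ tensm M (runit M (tens M a b)) (idm (munit M))
     = assoc M a b (munit M)
       ∘ tensm M (tensm M (idm a) (runit M b) ∘ assoc M a b (munit M)) (idm (munit M))).
  { rewrite <- (triangle M (tens M a b) (munit M)), cmp_assoc, <- (tensm_id M a b).
    rewrite (assoc_nat M (idm a) (idm b) (lunit M (munit M))), <- cmp_assoc, pentagon.
    reassoc. arewrite (tensm_cmp_l a (assoc M b (munit M) (munit M))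
                                   (tensm M (idm b) (lunit M (munit M)))).
    rewrite triangle. arewrite <- (assoc_nat M (idm a) (runit M b) (idm (munit M))).
    rewrite <- tensm_cmp_r. reassoc. reflexivity. }
  apply (f_equal (fun t => assoc_inv M a b (munit M) ∘ t)) in Halpha.
  rewrite !cmp_assoc, assoc_iso1, !cmp_id_l in Halpha. exact Halpha.
Qed.

Lemma triangle_runit_invK i f :
  tensm M (idm i) (lunit M f) ∘ (assoc M i (munit M) f ∘ tensm M (runit_inv M i) (idm f))
  = idm _.
Proof. rewrite cmp_assoc, triangle, tensm_cmp_r, runit_iso2, tensm_id; reflexivity. Qed.

Lemma runit_tens_invK i f :
  tensm M (idm i) (runit M f) ∘ (assoc M i f (munit M) ∘ runit_inv M (tens M i f)) = idm _.
Proof. rewrite cmp_assoc, <- runit_tens, runit_iso2; reflexivity. Qed.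

End MonoidalCoherence.

Section ParamMonadFacts.
Variables (I C : Cat) (PM : ParamMonad I C).

Lemma Pmap_natural i i' j j' (u : hom i' i) (v : hom j j') X Y (h : hom X Y) :
  Pmap PM u v Y ∘ fmap (P PM i j) h = fmap (P PM i' j') h ∘ Pmap PM u v X.
Proof. exact (naturality (Pmap PM u v) h). Qed.

Lemma Pmap_cmp_r i j j' j'' (v : hom j j') (v' : hom j' j'') X :
  Pmap PM (idm i) v' X ∘ Pmap PM (idm i) v X = Pmap PM (idm i) (v' ∘ v) X.
Proof. rewrite <- Pmap_cmp, cmp_id_l; reflexivity. Qed.

Lemma Pmap_interchange i i' j j' (u : hom i' i) (v : hom j j') X :
  Pmap PM (idm i') v X ∘ Pmap PM u (idm j) X = Pmap PM u (idm j') X ∘ Pmap PM (idm i) v X.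
Proof. rewrite <- !Pmap_cmp, !cmp_id_l, !cmp_id_r; reflexivity. Qed.

Lemma muP_nat_r i j k k' (w : hom k k') X :
  muP PM i j k' X ∘ fmap (P PM i j) (Pmap PM (idm j) w X)
  = Pmap PM (idm i) w X ∘ muP PM i j k X.
Proof. rewrite <- muP_nat; unfold hcomp; rewrite Pmap_id, cmp_id_l; reflexivity. Qed.

Lemma muP_nat_l i i' j k (u : hom i' i) X :
  muP PM i' j k X ∘ Pmap PM u (idm j) (P PM j k X) = Pmap PM u (idm k) X ∘ muP PM i j k X.
Proof. rewrite <- muP_nat; unfold hcomp; rewrite Pmap_id, fmap_id, cmp_id_r; reflexivity. Qed.

Lemma muP_natural i j k X Y (h : hom X Y) :
  muP PM i j k Y ∘ fmap (P PM i j) (fmap (P PM j k) h) = fmap (P PM i k) h ∘ muP PM i j k X.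
Proof. exact (naturality (muP PM i j k) h). Qed.

Lemma etaP_natural i X Y (h : hom X Y) :
  etaP PM i Y ∘ h = fmap (P PM i i) h ∘ etaP PM i X.
Proof. exact (naturality (etaP PM i) h). Qed.

End ParamMonadFacts.

Section Ends.
Variables (J D : Cat) (Hob : J -> J -> D)
  (Hmap : forall i i' j j' : J, hom i' i -> hom j j' -> hom (Hob i j) (Hob i' j')).

Lemma wedge_precmp W (pi : forall i, hom W (Hob i i)) W' (h : hom W' W) :
  is_wedge Hmap W pi -> is_wedge Hmap W' (fun i => pi i ∘ h).
Proof. intros Hw i j u; rewrite !cmp_assoc, Hw; reflexivity. Qed.

Variables (W : D) (pi : forall i, hom W (Hob i i)) (pi_end : is_end Hmap W pi).

Definition end_lift W' (pi' : forall i, hom W' (Hob i i)) (Hw : is_wedge Hmap W' pi')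
  : hom W' W :=
  proj1_sig (constructive_indefinite_description _ (proj2 pi_end W' pi' Hw)).

Lemma end_lift_proj W' pi' (Hw : is_wedge Hmap W' pi') i : pi i ∘ end_lift Hw = pi' i.
Proof.
  exact (proj1 (proj2_sig (constructive_indefinite_description _ (proj2 pi_end W' pi' Hw))) i).
Qed.

Lemma end_hom_ext W' (h1 h2 : hom W' W) : (forall i, pi i ∘ h1 = pi i ∘ h2) -> h1 = h2.
Proof.
  intro Heq.
  destruct (proj2 pi_end W' _ (wedge_precmp h1 (proj1 pi_end))) as [h [_ Huniq]].
  rewrite (Huniq h1), (Huniq h2); [reflexivity | | ]; intro i; [symmetry; apply Heq | reflexivity].
Qed.

End Ends.

Section EndGradedMonad.
Variables (I C : Cat) (M : Monoidal I) (PM : ParamMonad I C) (Gob : I -> C -> C)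
  (pi : forall f X i, hom (Gob f X) (P PM i (tens M i f) X))
  (pi_end : forall f X, is_end (integrand_map M PM f X) (Gob f X) (pi f X)).

Lemma pi_wedge f X i j (u : hom i j) :
  Pmap PM (idm i) (tensm M u (idm f)) X ∘ pi f X i
  = Pmap PM u (idm (tens M j f)) X ∘ pi f X j.
Proof.
  pose proof (proj1 (pi_end f X) i j u) as Hw.
  unfold integrand_map in Hw; rewrite tensm_id in Hw; exact Hw.
Qed.

Lemma Gob_hom_ext f X W (h1 h2 : hom W (Gob f X)) :
  (forall i, pi f X i ∘ h1 = pi f X i ∘ h2) -> h1 = h2.
Proof. apply (end_hom_ext (pi_end f X)). Qed.

Lemma fmap_wedge f X Y (h : hom X Y) :
  is_wedge (integrand_map M PM f Y) (Gob f X)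
    (fun i => fmap (P PM i (tens M i f)) h ∘ pi f X i).
Proof.
  intros i j u; unfold integrand_map; rewrite tensm_id; reassoc.
  arewrite (Pmap_natural PM (idm i) (tensm M u (idm f)) h).
  arewrite (pi_wedge f X u).
  arewrite <- (Pmap_natural PM u (idm (tens M j f)) h).
  reflexivity.
Qed.

Definition Gfun_map f X Y (h : hom X Y) : hom (Gob f X) (Gob f Y) :=
  end_lift (pi_end f Y) (fmap_wedge f h).

Lemma pi_Gfun_map f X Y (h : hom X Y) i :
  pi f Y i ∘ Gfun_map f h = fmap (P PM i (tens M i f)) h ∘ pi f X i.
Proof. exact (end_lift_proj (pi_end f Y) (fmap_wedge f h) i). Qed.

Definition Gfun (f : I) : Functor C C.
Proof.
  refine {| fobj := Gob f; fmap := Gfun_map f |}.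
  - intro X; apply Gob_hom_ext; intro i.
    rewrite pi_Gfun_map, fmap_id, cmp_id_l, cmp_id_r; reflexivity.
  - intros X Y Z h1 h2; apply Gob_hom_ext; intro i.
    arewrite (pi_Gfun_map f (h2 ∘ h1) i).
    arewrite (pi_Gfun_map f h2 i). arewrite (pi_Gfun_map f h1 i).
    rewrite fmap_cmp; reassoc; reflexivity.
Defined.

Lemma grade_wedge f f' (u : hom f f') X :
  is_wedge (integrand_map M PM f' X) (Gob f X)
    (fun i => Pmap PM (idm i) (tensm M (idm i) u) X ∘ pi f X i).
Proof.
  intros i j w; unfold integrand_map; rewrite tensm_id; reassoc.
  arewrite (Pmap_cmp_r PM i (tensm M (idm i) u) (tensm M w (idm f')) X).
  rewrite tensm_interchange.
  arewrite <- (Pmap_cmp_r PM i (tensm M w (idm f)) (tensm M (idm j) u) X).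
  arewrite (pi_wedge f X w).
  arewrite (Pmap_interchange PM w (tensm M (idm j) u) X).
  reflexivity.
Qed.

Definition grade_map f f' (u : hom f f') X : hom (Gob f X) (Gob f' X) :=
  end_lift (pi_end f' X) (grade_wedge u X).

Lemma pi_grade_map f f' (u : hom f f') X i :
  pi f' X i ∘ grade_map u X = Pmap PM (idm i) (tensm M (idm i) u) X ∘ pi f X i.
Proof. exact (end_lift_proj (pi_end f' X) (grade_wedge u X) i). Qed.

Definition Ggrade f f' (u : hom f f') : NatTrans (Gfun f) (Gfun f').
Proof.
  refine (@Build_NatTrans C C (Gfun f) (Gfun f') (grade_map u) _).
  intros X Y h; apply Gob_hom_ext; intro i; cbn.
  arewrite (pi_grade_map u Y i). arewrite (pi_Gfun_map f h i).
  arewrite (pi_Gfun_map f' h i). arewrite (pi_grade_map u X i).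
  arewrite (Pmap_natural PM (idm i) (tensm M (idm i) u) h).
  reflexivity.
Defined.

Lemma unit_wedge X :
  is_wedge (integrand_map M PM (munit M) X) X
    (fun i => Pmap PM (idm i) (runit_inv M i) X ∘ etaP PM i X).
Proof.
  intros i j w; unfold integrand_map; rewrite tensm_id; reassoc.
  arewrite (Pmap_cmp_r PM i (runit_inv M i) (tensm M w (idm (munit M))) X).
  rewrite runit_inv_nat.
  arewrite <- (Pmap_cmp_r PM i w (runit_inv M j) X).
  arewrite <- (etaP_dinat PM w X).
  arewrite (Pmap_interchange PM w (runit_inv M j) X).
  reflexivity.
Qed.

Definition unit_map X : hom X (Gob (munit M) X) := end_lift (pi_end (munit M) X) (unit_wedge X).

Lemma pi_unit_map X i :
  pi (munit M) X i ∘ unit_map X = Pmap PM (idm i) (runit_inv M i) X ∘ etaP PM i X.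
Proof. exact (end_lift_proj (pi_end (munit M) X) (unit_wedge X) i). Qed.

Definition Gunit : NatTrans (IdF C) (Gfun (munit M)).
Proof.
  refine (@Build_NatTrans C C (IdF C) (Gfun (munit M)) unit_map _).
  intros X Y h; apply Gob_hom_ext; intro i; cbn.
  arewrite (pi_unit_map Y i). arewrite (pi_Gfun_map (munit M) h i).
  arewrite (pi_unit_map X i).
  arewrite (etaP_natural PM i h).
  arewrite (Pmap_natural PM (idm i) (runit_inv M i) h).
  reflexivity.
Defined.

Definition mult_component f g X i : hom (Gob f (Gob g X)) (P PM i (tens M i (tens M f g)) X) :=
  Pmap PM (idm i) (assoc M i f g) X
  ∘ muP PM i (tens M i f) (tens M (tens M i f) g) X
  ∘ fmap (P PM i (tens M i f)) (pi g X (tens M i f))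
  ∘ pi f (Gob g X) i.

Lemma mult_wedge f g X :
  is_wedge (integrand_map M PM (tens M f g) X) (Gob f (Gob g X)) (mult_component f g X).
Proof.
  intros i j w; unfold integrand_map, mult_component; rewrite tensm_id; reassoc.
  arewrite (Pmap_cmp_r PM i (assoc M i f g) (tensm M w (idm (tens M f g))) X).
  rewrite assoc_nat_l.
  arewrite <- (Pmap_cmp_r PM i (tensm M (tensm M w (idm f)) (idm g)) (assoc M j f g) X).
  arewrite <- (muP_nat_r PM i (tens M i f) (tensm M (tensm M w (idm f)) (idm g)) X).
  arewrite <- (fmap_cmp (P PM i (tens M i f)) (pi g X (tens M i f))
                 (Pmap PM (idm (tens M i f)) (tensm M (tensm M w (idm f)) (idm g)) X)).
  rewrite (pi_wedge g X (tensm M w (idm f))).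
  arewrite (fmap_cmp (P PM i (tens M i f)) (pi g X (tens M j f))
              (Pmap PM (tensm M w (idm f)) (idm (tens M (tens M j f) g)) X)).
  arewrite (muP_dinat PM i (tens M (tens M j f) g) (tensm M w (idm f)) X).
  arewrite (Pmap_natural PM (idm i) (tensm M w (idm f)) (pi g X (tens M j f))).
  arewrite (pi_wedge f (Gob g X) w).
  arewrite <- (Pmap_natural PM w (idm (tens M j f)) (pi g X (tens M j f))).
  arewrite (muP_nat_l PM (tens M j f) (tens M (tens M j f) g) w X).
  arewrite (Pmap_interchange PM w (assoc M j f g) X).
  reflexivity.
Qed.

Definition mult_map f g X : hom (Gob f (Gob g X)) (Gob (tens M f g) X) :=
  end_lift (pi_end (tens M f g) X) (mult_wedge f g X).

Lemma pi_mult_map f g X i : pi (tens M f g) X i ∘ mult_map f g X = mult_component f g X i.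
Proof. exact (end_lift_proj (pi_end (tens M f g) X) (mult_wedge f g X) i). Qed.

Definition Gmult f g : NatTrans (FComp (Gfun f) (Gfun g)) (Gfun (tens M f g)).
Proof.
  refine (@Build_NatTrans C C (FComp (Gfun f) (Gfun g)) (Gfun (tens M f g)) (mult_map f g) _).
  intros X Y h; apply Gob_hom_ext; intro i; cbn.
  arewrite (pi_mult_map f g Y i); unfold mult_component; reassoc.
  arewrite (pi_Gfun_map f (Gfun_map g h) i).
  arewrite <- (fmap_cmp (P PM i (tens M i f)) (Gfun_map g h) (pi g Y (tens M i f))).
  rewrite (pi_Gfun_map g h (tens M i f)), fmap_cmp; reassoc.
  arewrite (muP_natural PM i (tens M i f) (tens M (tens M i f) g) h).
  arewrite (Pmap_natural PM (idm i) (assoc M i f g) h).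
  arewrite (pi_Gfun_map (tens M f g) h i).
  arewrite (pi_mult_map f g X i); unfold mult_component; reassoc.
  reflexivity.
Defined.

Lemma Ggrade_id f X : Ggrade (idm f) X = idm _.
Proof.
  apply Gob_hom_ext; intro i; cbn.
  arewrite (pi_grade_map (idm f) X i).
  rewrite tensm_id, Pmap_id, cmp_id_l, cmp_id_r; reflexivity.
Qed.

Lemma Ggrade_cmp f f' f'' (u : hom f f') (u' : hom f' f'') X :
  Ggrade (u' ∘ u) X = Ggrade u' X ∘ Ggrade u X.
Proof.
  apply Gob_hom_ext; intro i; cbn.
  arewrite (pi_grade_map (u' ∘ u) X i).
  arewrite (pi_grade_map u' X i). arewrite (pi_grade_map u X i).
  arewrite (Pmap_cmp_r PM i (tensm M (idm i) u) (tensm M (idm i) u') X).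
  rewrite tensm_cmp_l; reflexivity.
Qed.

Lemma Gmult_natural f f' g g' (u : hom f f') (v : hom g g') X :
  Gmult f' g' X ∘ hcomp (Ggrade u) (Ggrade v) X = Ggrade (tensm M u v) X ∘ Gmult f g X.
Proof.
  apply Gob_hom_ext; intro i; unfold hcomp; cbn.
  arewrite (pi_mult_map f' g' X i); unfold mult_component; reassoc.
  arewrite (pi_grade_map u (Gob g' X) i).
  arewrite (pi_Gfun_map f (grade_map v X) i).
  arewrite <- (Pmap_natural PM (idm i) (tensm M (idm i) u) (pi g' X (tens M i f'))).
  arewrite <- (muP_dinat PM i (tens M (tens M i f') g') (tensm M (idm i) u) X).
  arewrite <- (fmap_cmp (P PM i (tens M i f)) (pi g' X (tens M i f'))
                 (Pmap PM (tensm M (idm i) u) (idm (tens M (tens M i f') g')) X)).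
  arewrite <- (fmap_cmp (P PM i (tens M i f)) (grade_map v X)
                 (Pmap PM (tensm M (idm i) u) (idm (tens M (tens M i f') g')) X
                  ∘ pi g' X (tens M i f'))).
  arewrite (pi_grade_map v X (tens M i f')).
  arewrite <- (Pmap_interchange PM (tensm M (idm i) u) (tensm M (idm (tens M i f')) v) X).
  arewrite <- (pi_wedge g X (tensm M (idm i) u)).
  arewrite (Pmap_cmp_r PM (tens M i f) (tensm M (tensm M (idm i) u) (idm g))
              (tensm M (idm (tens M i f')) v) X).
  rewrite <- tensm_cmp, cmp_id_l, cmp_id_r, fmap_cmp; reassoc.
  arewrite (muP_nat_r PM i (tens M i f) (tensm M (tensm M (idm i) u) v) X).
  arewrite (Pmap_cmp_r PM i (tensm M (tensm M (idm i) u) v) (assoc M i f' g') X).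
  rewrite (assoc_nat M (idm i) u v).
  arewrite <- (Pmap_cmp_r PM i (assoc M i f g) (tensm M (idm i) (tensm M u v)) X).
  arewrite (pi_grade_map (tensm M u v) X i).
  arewrite (pi_mult_map f g X i); unfold mult_component; reassoc.
  reflexivity.
Qed.

Lemma Gmult_unit_l f X :
  Ggrade (lunit M f) X ∘ Gmult (munit M) f X ∘ Gunit (Gfun f X) = idm _.
Proof.
  apply Gob_hom_ext; intro i; cbn; rewrite cmp_id_r; reassoc.
  arewrite (pi_grade_map (lunit M f) X i).
  arewrite (pi_mult_map (munit M) f X i); unfold mult_component; reassoc.
  arewrite (pi_unit_map (Gob f X) i).
  arewrite <- (Pmap_natural PM (idm i) (runit_inv M i) (pi f X (tens M i (munit M)))).
  arewrite <- (muP_dinat PM i (tens M (tens M i (munit M)) f) (runit_inv M i) X).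
  arewrite <- (etaP_natural PM i (pi f X (tens M i (munit M)))).
  arewrite <- (etaP_natural PM i
                 (Pmap PM (runit_inv M i) (idm (tens M (tens M i (munit M)) f)) X)).
  arewrite (muP_unit_l PM i (tens M (tens M i (munit M)) f) X). rewrite cmp_id_l.
  arewrite <- (pi_wedge f X (runit_inv M i)).
  arewrite (Pmap_cmp_r PM i (tensm M (runit_inv M i) (idm f)) (assoc M i (munit M) f) X).
  arewrite (Pmap_cmp_r PM i (assoc M i (munit M) f ∘ tensm M (runit_inv M i) (idm f))
              (tensm M (idm i) (lunit M f)) X).
  rewrite triangle_runit_invK, Pmap_id, cmp_id_l; reflexivity.
Qed.

Lemma Gmult_unit_r f X :
  Ggrade (runit M f) X ∘ Gmult f (munit M) X ∘ fmap (Gfun f) (Gunit X) = idm _.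
Proof.
  apply Gob_hom_ext; intro i; cbn; rewrite cmp_id_r; reassoc.
  arewrite (pi_grade_map (runit M f) X i).
  arewrite (pi_mult_map f (munit M) X i); unfold mult_component; reassoc.
  arewrite (pi_Gfun_map f (unit_map X) i).
  arewrite <- (fmap_cmp (P PM i (tens M i f)) (unit_map X) (pi (munit M) X (tens M i f))).
  rewrite (pi_unit_map X (tens M i f)), fmap_cmp; reassoc.
  arewrite (muP_nat_r PM i (tens M i f) (runit_inv M (tens M i f)) X).
  arewrite (muP_unit_r PM i (tens M i f) X). rewrite cmp_id_l.
  arewrite (Pmap_cmp_r PM i (runit_inv M (tens M i f)) (assoc M i f (munit M)) X).
  arewrite (Pmap_cmp_r PM i (assoc M i f (munit M) ∘ runit_inv M (tens M i f))
              (tensm M (idm i) (runit M f)) X).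
  rewrite runit_tens_invK, Pmap_id, cmp_id_l; reflexivity.
Qed.

Lemma Gmult_assoc f g h X :
  Ggrade (assoc M f g h) X ∘ Gmult (tens M f g) h X ∘ Gmult f g (Gfun h X)
  = Gmult f (tens M g h) X ∘ fmap (Gfun f) (Gmult g h X).
Proof.
  apply Gob_hom_ext; intro i; cbn; reassoc.
  arewrite (pi_grade_map (assoc M f g h) X i).
  arewrite (pi_mult_map (tens M f g) h X i); unfold mult_component; reassoc.
  arewrite (pi_mult_map f g (Gob h X) i); unfold mult_component; reassoc.
  arewrite <- (Pmap_natural PM (idm i) (assoc M i f g) (pi h X (tens M i (tens M f g)))).
  arewrite <- (muP_dinat PM i (tens M (tens M i (tens M f g)) h) (assoc M i f g) X).
  arewrite <- (fmap_cmp (P PM i (tens M (tens M i f) g)) (pi h X (tens M i (tens M f g)))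
                 (Pmap PM (assoc M i f g) (idm (tens M (tens M i (tens M f g)) h)) X)).
  arewrite <- (pi_wedge h X (assoc M i f g)).
  rewrite fmap_cmp; reassoc.
  arewrite (muP_nat_r PM i (tens M (tens M i f) g) (tensm M (assoc M i f g) (idm h)) X).
  arewrite <- (muP_natural PM i (tens M i f) (tens M (tens M i f) g)
                 (pi h X (tens M (tens M i f) g))).
  arewrite (muP_assoc PM i (tens M i f) (tens M (tens M i f) g)
              (tens M (tens M (tens M i f) g) h) X).
  arewrite (Pmap_cmp_r PM i (tensm M (assoc M i f g) (idm h)) (assoc M i (tens M f g) h) X).
  arewrite (Pmap_cmp_r PM i (assoc M i (tens M f g) h ∘ tensm M (assoc M i f g) (idm h))
              (tensm M (idm i) (assoc M f g h)) X).
  arewrite (pi_mult_map f (tens M g h) X i); unfold mult_component; reassoc.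
  arewrite (pi_Gfun_map f (mult_map g h X) i).
  arewrite <- (fmap_cmp (P PM i (tens M i f)) (mult_map g h X)
                 (pi (tens M g h) X (tens M i f))).
  arewrite (pi_mult_map g h X (tens M i f)); unfold mult_component.
  rewrite !(fmap_cmp (P PM i (tens M i f))); reassoc.
  arewrite (muP_nat_r PM i (tens M i f) (assoc M (tens M i f) g h) X).
  arewrite (Pmap_cmp_r PM i (assoc M (tens M i f) g h) (assoc M i f (tens M g h)) X).
  rewrite pentagon; reassoc.
  reflexivity.
Qed.

Definition end_graded_monad : GradedMonad M C :=
  {| G := Gfun; Gmap := Ggrade; Gmap_id := Ggrade_id; Gmap_cmp := Ggrade_cmp;
     geta := Gunit; gmu := Gmult; gmu_nat := Gmult_natural;
     gunit_l := Gmult_unit_l; gunit_r := Gmult_unit_r; gassoc := Gmult_assoc |}.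

End EndGradedMonad.

Lemma choose_ends (I C : Cat) (M : Monoidal I) (PM : ParamMonad I C)
  (Hends : forall (f : I) (X : C),
      exists (W : C) (pi : forall i, hom W (integrand_ob M PM f X i i)),
        is_end (integrand_map M PM f X) W pi) :
  {Gob : I -> C -> C &
   {pi : forall f X i, hom (Gob f X) (P PM i (tens M i f) X) |
    forall f X, is_end (integrand_map M PM f X) (Gob f X) (pi f X)}}.
Proof.
  pose (W f X := constructive_indefinite_description _ (Hends f X)).
  exists (fun f X => proj1_sig (W f X)).
  exists (fun f X => proj1_sig (constructive_indefinite_description _ (proj2_sig (W f X)))).
  intros f X; exact (proj2_sig (constructive_indefinite_description _ (proj2_sig (W f X)))).
Qed.

Theorem proposition40 (I C : Cat) (M : Monoidal I) (HC : finitely_complete C)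
  (PM : ParamMonad I C)
  (Hends : forall (f : I) (X : C),
      exists (W : C) (pi : forall i, hom W (integrand_ob M PM f X i i)),
        is_end (integrand_map M PM f X) W pi) :
  exists (GM : GradedMonad M C)
         (pi : forall (f : I) (X : C) (i : I),
                 hom (G GM f X) (P PM i (tens M i f) X)),
    (* G f X is the end \int_i P(i, i . f) X, with projections pi *)
    (forall f X, is_end (integrand_map M PM f X) (G GM f X) (pi f X)) /\
    (* the functor G f on C is the one induced on the ends *)
    (forall f X Y (h : hom X Y) i,
        pi f Y i ∘ fmap (G GM f) h = fmap (P PM i (tens M i f)) h ∘ pi f X i) /\
    (* the action of G on grades is induced by P(i, i . u) *)
    (forall f f' (u : hom f f') X i,
        pi f' X i ∘ Gmap GM u X = Pmap PM (idm i) (tensm M (idm i) u) X ∘ pi f X i) /\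
    (* the unit is induced by eta^P_i : Id -> P(i,i) -> P(i, i . e) *)
    (forall X i,
        pi (munit M) X i ∘ geta GM X
        = Pmap PM (idm i) (runit_inv M i) X ∘ etaP PM i X) /\
    (* the multiplication is induced by mu^P_{i, i.f, (i.f).g} *)
    (forall f g X i,
        pi (tens M f g) X i ∘ gmu GM f g X
        = Pmap PM (idm i) (assoc M i f g) X
          ∘ muP PM i (tens M i f) (tens M (tens M i f) g) X
          ∘ fmap (P PM i (tens M i f)) (pi g X (tens M i f))
          ∘ pi f (G GM g X) i).
Proof.
  destruct (choose_ends Hends) as (Gob & pi & pi_end).
  exists (end_graded_monad pi_end), pi.
  split; [exact pi_end |].
  split; [intros f X Y h i; exact (pi_Gfun_map pi_end f h i) |].
  split; [intros f f' u X i; exact (pi_grade_map pi_end u X i) |].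
  split; [intros X i; exact (pi_unit_map pi_end X i) |].
  intros f g X i; exact (pi_mult_map pi_end f g X i).
Qed.
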